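(* Let $A$ and $B$ be real symmetric matrices such that $A\in\mathcal{S}(G_A)$ has the strong spectral property with respect to $H_A$ and $B\in\mathcal{S}(G_B)$ has the strong spectral property with respect to $H_B$, where $G_A$ is a spanning subgraph of $H_A$ and $G_B$ is a spanning subgraph of $H_B$. If $A$ and $B$ have no common eigenvalues, then $A\oplus B$ has the strong spectral property with respect to the disjoint union $H_A\oplus H_B$.
   Context: For a graph $G$ on $\{1,\ldots,n\}$, $\mathcal{S}(G)$ is the set of $n\times n$ real symmetric matrices $A=(a_{ij})$ with, for $i\neq j$, $a_{ij}\neq0$ iff $\{i,j\}\in E(G)$; $\mathcal{S}^{\rm cl}(G)$ is the set of $n\times n$ real symmetric matrices whose $(i,j)$-entry, $i\neq j$, is nonzero only if $\{i,j\}\in E(G)$. $\overline{H}$ is the complement of $H$. If $A\in\mathcal{S}(G)$ and $H$ is a graph on the same vertex set with $E(G)\subseteq E(H)$, then $A$ has the strong spectral property with respect to $H$ if the only real symmetric $X$ with $X\in\mathcal{S}^{\rm cl}(\overline{H})$, $I\circ X=O$ and $AX-XA=O$ is $X=O$. $A\oplus B$ is the block diagonal direct sum, with vertices of $H_B$ indexed after those of $H_A$. *)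

From mathcomp Require Import all_boot all_order all_algebra.
From mathcomp Require Import reals.
Set Implicit Arguments. Unset Strict Implicit. Unset Printing Implicit Defensive.
Import Order.TTheory GRing.Theory Num.Theory.
Local Open Scope ring_scope.

Definition simple_graph (n : nat) (G : rel 'I_n) : Prop :=
  (forall i j, G i j = G j i) /\ (forall i, G i i = false).

Definition spanning_subgraph (n : nat) (G H : rel 'I_n) : Prop :=
  forall i j, G i j -> H i j.

Definition gcompl (n : nat) (H : rel 'I_n) : rel 'I_n :=
  fun i j => (i != j) && ~~ H i j.

Definition symmetric_mx (R : Type) (n : nat) (A : 'M[R]_n) : Prop := A^T = A.

Definition in_S (R : realType) (n : nat) (G : rel 'I_n) (A : 'M[R]_n) : Prop :=
  symmetric_mx A /\ forall i j, i != j -> (A i j != 0) = G i j.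

Definition in_Scl (R : realType) (n : nat) (G : rel 'I_n) (A : 'M[R]_n) : Prop :=
  symmetric_mx A /\ forall i j, i != j -> A i j != 0 -> G i j.

Definition SSP_wrt (R : realType) (n : nat) (A : 'M[R]_n) (H : rel 'I_n) : Prop :=
  forall X : 'M[R]_n,
    symmetric_mx X -> in_Scl (gcompl H) X -> (forall i, X i i = 0) ->
    A *m X - X *m A = 0 -> X = 0.

(* disjoint union of graphs; vertices of HB indexed after those of HA *)
Definition gunion (m n : nat) (HA : rel 'I_m) (HB : rel 'I_n) : rel 'I_(m + n) :=
  fun i j => match split i, split j with
             | inl a, inl b => HA a b
             | inr a, inr b => HB a b
             | _, _ => false
             end.

Definition dsum_mx (R : nmodType) (m n : nat) (A : 'M[R]_m) (B : 'M[R]_n)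
  : 'M[R]_(m + n) := block_mx A 0 0 B.

From mathcomp Require Import all_boot all_order all_algebra.
From mathcomp Require Import spectral sesquilinear.
From mathcomp Require Import reals complex.
Set Implicit Arguments.
Unset Strict Implicit.
Unset Printing Implicit Defensive.
Import GRing.Theory Num.Theory.
Local Open Scope ring_scope.

(* Split a symmetric X commuting with A (+) B into blocks [X1 X2; X2^T X4].
   The diagonal blocks commute with A and B and are supported on the
   complements of H_A and H_B, so the SSP of A and B kills X1 and X4.  The off-diagonal block solves the
   Sylvester equation A X2 = X2 B.  As B is symmetric, its characteristic
   polynomial p splits over the reals, so p(A) is invertible (A and B share no
   eigenvalue) while p(B) = 0 by Cayley-Hamilton; hence p(A) X2 = X2 p(B) = 0
   gives X2 = 0. *)

Lemma hermitian_eigenvalue_real (C : numClosedFieldType) n (A : 'M[C]_n) z :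
  (A ^t* = A)%sesqui -> eigenvalue A z -> z \is Num.real.
Proof.
move=> hA /eigenvalueP [v vA nz_v].
have Avt : (A *m v ^t* = z^* *: v ^t*)%sesqui.
  by rewrite -[in LHS]hA -map_mxM -trmx_mul vA linearZ /= map_mxZ.
have : (v *m A *m v ^t*)%sesqui 0 0 = z * dotmx v v.
  by rewrite vA -scalemxAl mxE dotmxE.
rewrite -mulmxA Avt -scalemxAr mxE -dotmxE => /eqP.
rewrite -subr_eq0 -mulrBl mulf_eq0 dnorm_eq0 (negPf nz_v) orbF subr_eq0.
by rewrite CrealE eq_sym.
Qed.

Lemma symmetric_char_poly_split (R : rcfType) n (B : 'M[R]_n) :
  B^T = B -> exists rs : seq R, char_poly B = \prod_(r <- rs) ('X - r%:P).
Proof.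
move=> sB; set BC := map_mx (real_complex R) B.
have hBC : (BC ^t* = BC)%sesqui.
  rewrite map_trmx /BC sB -map_mx_comp; apply: eq_map_mx => x /=.
  exact: conjc_real.
have [zs BCzs] := closed_field_poly_normal (char_poly BC).
rewrite (monicP (char_poly_monic _)) scale1r in BCzs.
have zs_real z : z \in zs -> z \is Num.real.
  move=> zs_z; apply: (hermitian_eigenvalue_real hBC).
  by rewrite eigenvalue_root_char BCzs root_prod_XsubC.
exists (map (@complex.Re R) zs); apply: (map_poly_inj (real_complex R)).
rewrite map_char_poly BCzs rmorph_prod big_map; apply: eq_big_seq => z zs_z.
by rewrite /= map_polyXsubC -{1}(RRe_real (zs_real z zs_z)).
Qed.

Lemma horner_mx_intertwine (R : comNzRingType) m n (A : 'M[R]_m.+1)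
    (B : 'M[R]_n.+1) (X : 'M_(m.+1, n.+1)) p :
  A *m X = X *m B -> horner_mx A p *m X = X *m horner_mx B p.
Proof.
move=> AX; elim/poly_ind: p => [|p c IHp].
  by rewrite !rmorph0 mul0mx mulmx0.
rewrite !rmorphD !rmorphM /= !horner_mx_X !horner_mx_C mulmxDl mulmxDr.
by rewrite -!mulmxA AX !mulmxA IHp scalar_mxC.
Qed.

Lemma unitmx_sub_scalar (F : fieldType) n (A : 'M[F]_n) a :
  (A - a%:M \in unitmx) = ~~ eigenvalue A a.
Proof. by rewrite /eigenvalue /eigenspace negbK kermx_eq0 row_free_unit. Qed.

Lemma sylvester_eq0 (F : fieldType) m n (A : 'M[F]_m) (B : 'M[F]_n)
    (X : 'M_(m, n)) (rs : seq F) :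
  char_poly B = \prod_(r <- rs) ('X - r%:P) ->
  (forall a, ~ (eigenvalue A a /\ eigenvalue B a)) ->
  A *m X = X *m B -> X = 0.
Proof.
case: m A X => [|m] A X; first by move=> *; apply: flatmx0.
case: n B X => [|n] B X; first by move=> *; apply: thinmx0.
move=> Brs AB_disjoint AX.
have pA_unit : horner_mx A (char_poly B) \in unitmx.
  rewrite Brs rmorph_prod big_seq; apply: (big_ind (fun M => M \in unitmx)).
  - exact: unitmx1.
  - by move=> M N uM uN; rewrite unitmx_mul uM.
  move=> r rs_r; rewrite rmorphB /= horner_mx_X horner_mx_C unitmx_sub_scalar.
  apply/negP=> Ar; apply: (AB_disjoint r); split=> //.
  by rewrite eigenvalue_root_char Brs root_prod_XsubC.
have := horner_mx_intertwine (char_poly B) AX.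
rewrite Cayley_Hamilton (mulmx0 _ X) => pA_X.
by rewrite -[X](mulKmx pA_unit) pA_X mulmx0.
Qed.

Section DirectSum.
Variables (m n : nat) (HA : rel 'I_m) (HB : rel 'I_n).

Lemma gcompl_gunion_lshift i j :
  gcompl (gunion HA HB) (lshift n i) (lshift n j) = gcompl HA i j.
Proof. by rewrite /gcompl /gunion eq_lshift !(unsplitK (inl _)). Qed.

Lemma gcompl_gunion_rshift i j :
  gcompl (gunion HA HB) (rshift m i) (rshift m j) = gcompl HB i j.
Proof. by rewrite /gcompl /gunion eq_rshift !(unsplitK (inr _)). Qed.

Variable R : realType.
Implicit Type X : 'M[R]_(m + n).

Lemma in_Scl_ulsubmx X :
  in_Scl (gcompl (gunion HA HB)) X -> in_Scl (gcompl HA) (ulsubmx X).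
Proof.
move=> [sX XH]; split; first by rewrite /symmetric_mx trmx_ulsub sX.
move=> i j ij; rewrite !mxE -gcompl_gunion_lshift; apply: XH.
by rewrite eq_lshift.
Qed.

Lemma in_Scl_drsubmx X :
  in_Scl (gcompl (gunion HA HB)) X -> in_Scl (gcompl HB) (drsubmx X).
Proof.
move=> [sX XH]; split; first by rewrite /symmetric_mx trmx_drsub sX.
move=> i j ij; rewrite !mxE -gcompl_gunion_rshift; apply: XH.
by rewrite eq_rshift.
Qed.

End DirectSum.

Lemma commutator_dsum_mx (R : pzRingType) m n (A : 'M[R]_m) (B : 'M[R]_n)
    (X : 'M[R]_(m + n)) :
  dsum_mx A B *m X - X *m dsum_mx A B =
  block_mx (A *m ulsubmx X - ulsubmx X *m A) (A *m ursubmx X - ursubmx X *m B)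
           (B *m dlsubmx X - dlsubmx X *m A) (B *m drsubmx X - drsubmx X *m B).
Proof.
rewrite /dsum_mx -{1 2}[X]submxK !mulmx_block !mul0mx !mulmx0 !addr0 !add0r.
by rewrite opp_block_mx add_block_mx.
Qed.

Theorem proposition3p5 (R : realType) (m n : nat)
  (GA HA : rel 'I_m) (GB HB : rel 'I_n) (A : 'M[R]_m) (B : 'M[R]_n) :
  simple_graph GA -> simple_graph HA -> simple_graph GB -> simple_graph HB ->
  spanning_subgraph GA HA -> spanning_subgraph GB HB ->
  in_S GA A -> in_S GB B ->
  SSP_wrt A HA -> SSP_wrt B HB ->
  (forall a : R, ~ (eigenvalue A a /\ eigenvalue B a)) ->
  SSP_wrt (dsum_mx A B) (gunion HA HB).
Proof.
move=> _ _ _ _ _ _ _ [sB _] sspA sspB AB_disjoint X sX XH X_diag.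
rewrite commutator_dsum_mx -block_mx0 => /eq_block_mx [commA AXB _ commB].
have X_ul : ulsubmx X = 0.
  have Xul_scl := in_Scl_ulsubmx XH.
  by apply: (sspA _ Xul_scl.1 Xul_scl _ commA) => i; rewrite !mxE X_diag.
have X_dr : drsubmx X = 0.
  have Xdr_scl := in_Scl_drsubmx XH.
  by apply: (sspB _ Xdr_scl.1 Xdr_scl _ commB) => i; rewrite !mxE X_diag.
have X_ur : ursubmx X = 0.
  have [rs Brs] := symmetric_char_poly_split sB.
  by apply: (sylvester_eq0 Brs AB_disjoint); apply/eqP; rewrite -subr_eq0 AXB.
have X_dl : dlsubmx X = 0 by rewrite -[X]sX -trmx_ursub X_ur trmx0.
by rewrite -[X]submxK X_ul X_ur X_dl X_dr block_mx0.
Qed.
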